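(* Let $0<\alpha<1$ and let $g_\alpha$ be the generalized conical spacetime metric on $\mathbb{R}^4$ (described in the context), $S=\{0\}\times\mathbb{R}^3$, and $e$ the Euclidean metric on $\mathbb{R}^4$. Suppose the generalized curve $\gamma\in\mathcal{G}[\mathbb{R},\mathbb{R}^4]$ satisfies $e(\dot\gamma,\dot\gamma)=1$ in $\mathcal{G}(\mathbb{R})$ and $g_\alpha(\dot\gamma,\dot\gamma)$ is uniformly strictly negative, i.e., for any representatives $(\gamma_\varepsilon)_{\varepsilon\in(0,1]}$ of $\gamma$ and $(g_\alpha^\varepsilon)_{\varepsilon\in(0,1]}$ of $g_\alpha$ there exist $q\in[0,\infty)$ and $\varepsilon_0\in(0,1]$ such that $$g_\alpha^\varepsilon(\gamma_\varepsilon(s))(\dot\gamma_\varepsilon(s),\dot\gamma_\varepsilon(s))\le -\varepsilon^q\qquad(s\in\mathbb{R},\ 0<\varepsilon<\varepsilon_0).$$ Then there is a unique $\tilde s\in(\widetilde{\mathbb{R}})_c$ such that $\gamma(\tilde s)\in\widetilde S_c$.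
   Context: Generalized conical spacetime: with coordinates $(t,x,y,z)$, $g_\alpha$ is the Colombeau generalized Lorentz metric represented by $g_\alpha^\varepsilon=-dt^2+\rho^\varepsilon$, $\rho^\varepsilon = (\frac{1+\alpha^2}{2}+\frac{1-\alpha^2}{2}f_1^\varepsilon)dx^2 + (\frac{1+\alpha^2}{2}-\frac{1-\alpha^2}{2}f_1^\varepsilon)dy^2 + (1-\alpha^2)f_2^\varepsilon\,dx\,dy + dz^2$, where $f_j^\varepsilon = f_j*\psi_\varepsilon$ are mollifications of $f_1=\frac{x^2-y^2}{x^2+y^2}$, $f_2=\frac{2xy}{x^2+y^2}$ by a real-valued delta net, chosen such that there is $\beta>0$ with $\rho^\varepsilon(x,y,z)(v,v)\ge\beta(v_1^2+v_2^2)+v_3^2$ for all points, all $v\in\mathbb{R}^3$ and all $\varepsilon\in(0,1]$ (e.g. $\psi_\varepsilon(x,y)=\varepsilon^{-2}\varphi(x/\varepsilon,y/\varepsilon)$ with $\varphi\in\mathcal S(\mathbb{R}^2)$ real, $\int\varphi=1$, and either $\varphi\ge0$ or $\alpha^2>(\|\varphi\|_{L^1}-1)/(\|\varphi\|_{L^1}+1)$). Colombeau notions (special algebra): $\mathcal{G}(\mathbb{R})$ is the quotient of moderate nets of smooth functions (each derivative $O(\varepsilon^{-N})$ uniformly on compacts) by negligible nets (each derivative $O(\varepsilon^m)$ for all $m$ uniformly on compacts). $\mathcal{G}[\mathbb{R},\mathbb{R}^4]$ is the space of c-bounded generalized maps: classes of moderate nets $(\gamma_\varepsilon)$ of smooth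 maps $\mathbb{R}\to\mathbb{R}^4$ such that every compact $K\subset\mathbb{R}$ has a compact $K'\subset\mathbb{R}^4$ with $\gamma_\varepsilon(K)\subset K'$ for small $\varepsilon$, modulo negligible nets. $(\widetilde{\mathbb{R}})_c$ is the set of compactly supported generalized points: nets $(s_\varepsilon)$ of reals bounded for small $\varepsilon$, modulo $|s_\varepsilon-t_\varepsilon|=O(\varepsilon^m)$ for all $m$; $\widetilde S_c$ is defined analogously with nets of points in $S$. The generalized point value $\gamma(\tilde s)$ is the class of $(\gamma_\varepsilon(s_\varepsilon))$. *)

From HB Require Import structures.
From mathcomp Require Import all_boot all_order all_algebra.
From mathcomp Require Import all_classical all_reals all_analysis.
Set Implicit Arguments. Unset Strict Implicit. Unset Printing Implicit Defensive.
Import Order.TTheory GRing.Theory Num.Theory.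
Import numFieldNormedType.Exports.
Local Open Scope classical_set_scope.
Local Open Scope ring_scope.

Section Defs.
Variable R : realType.

Definition for_small_eps (P : R -> Prop) : Prop :=
  exists e0 : R, 0 < e0 <= 1 /\ forall eps, 0 < eps < e0 -> P eps.

Definition smooth_fun (f : R -> R) : Prop :=
  forall (k : nat) (s : R), derivable (derive1n k f) s 1.

(* moderate / negligible nets of smooth functions R -> R (special algebra G(R));
   compact subsets of R are exhausted by the intervals [a,b]. *)
Definition moderate_net (u : R -> R -> R) : Prop :=
  forall (k : nat) (a b : R), exists (N : nat) (C : R),
    for_small_eps (fun eps => forall s, a <= s <= b ->
      `|derive1n k (u eps) s| <= C * eps ^- N).

Definition negligible_net (u : R -> R -> R) : Prop :=
  forall (k : nat) (a b : R) (m : nat), exists C : R,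
    for_small_eps (fun eps => forall s, a <= s <= b ->
      `|derive1n k (u eps) s| <= C * eps ^+ m).

Definition ct : 'I_4 := @Ordinal 4 0 isT.
Definition cx : 'I_4 := @Ordinal 4 1 isT.
Definition cy : 'I_4 := @Ordinal 4 2 isT.
Definition cz : 'I_4 := @Ordinal 4 3 isT.

(* a representative (gamma_eps) of an element of G[R,R^4] (c-bounded generalized map) *)
Definition c_bounded_curve_rep (gam : R -> R -> 'I_4 -> R) : Prop :=
  (forall eps, 0 < eps <= 1 -> forall i, smooth_fun (fun s => gam eps s i)) /\
  (forall i, moderate_net (fun eps s => gam eps s i)) /\
  (forall a b : R, exists C : R,
     for_small_eps (fun eps => forall s i, a <= s <= b -> `|gam eps s i| <= C)).

Definition vel (gam : R -> R -> 'I_4 -> R) (eps s : R) (i : 'I_4) : R :=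
  derive1 (fun r => gam eps r i) s.

Definition eucl_unit_speed (gam : R -> R -> 'I_4 -> R) : Prop :=
  negligible_net (fun eps s => (\sum_(i < 4) (vel gam eps s i) ^+ 2) - 1).

(* the functions f1, f2 on R^2 (value at the origin irrelevant: 0/0 = 0 here) *)
Definition f1 (x y : R) : R := (x ^+ 2 - y ^+ 2) / (x ^+ 2 + y ^+ 2).
Definition f2 (x y : R) : R := (2 * x * y) / (x ^+ 2 + y ^+ 2).

Definition leb2 := ((@lebesgue_measure R) \x (@lebesgue_measure R))%E.

Definition mollify (psi : R -> R -> R -> R) (f : R -> R -> R) (eps x y : R) : R :=
  Rintegral leb2 setT (fun p : R * R => f (x - p.1) (y - p.2) * psi eps p.1 p.2).

Definition delta_net (psi : R -> R -> R -> R) : Prop :=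
  (forall eps, 0 < eps <= 1 ->
     leb2.-integrable setT (fun p : R * R => (psi eps p.1 p.2)%:E) /\
     Rintegral leb2 setT (fun p : R * R => psi eps p.1 p.2) = 1) /\
  (exists C : R, forall eps, 0 < eps <= 1 ->
     Rintegral leb2 setT (fun p : R * R => `|psi eps p.1 p.2|) <= C) /\
  (forall r eta : R, 0 < r -> 0 < eta ->
     for_small_eps (fun eps =>
       Rintegral leb2 [set p : R * R | r ^+ 2 < p.1 ^+ 2 + p.2 ^+ 2]
         (fun p => `|psi eps p.1 p.2|) <= eta)).

Definition rho (alpha : R) (psi : R -> R -> R -> R) (eps x y z v1 v2 v3 : R) : R :=
  ((1 + alpha ^+ 2) / 2 + (1 - alpha ^+ 2) / 2 * mollify psi f1 eps x y) * v1 ^+ 2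
  + ((1 + alpha ^+ 2) / 2 - (1 - alpha ^+ 2) / 2 * mollify psi f1 eps x y) * v2 ^+ 2
  + (1 - alpha ^+ 2) * mollify psi f2 eps x y * v1 * v2
  + v3 ^+ 2.

Definition g_alpha (alpha : R) (psi : R -> R -> R -> R) (eps : R) (p v : 'I_4 -> R) : R :=
  - (v ct) ^+ 2 + rho alpha psi eps (p cx) (p cy) (p cz) (v cx) (v cy) (v cz).

Definition cpt_gen_num (s : R -> R) : Prop :=
  exists C : R, for_small_eps (fun eps => `|s eps| <= C).

Definition gen_num_eq (s s' : R -> R) : Prop :=
  forall m : nat, exists C : R,
    for_small_eps (fun eps => `|s eps - s' eps| <= C * eps ^+ m).

Definition in_S_tilde_c (P : R -> 'I_4 -> R) : Prop :=
  exists p : R -> 'I_4 -> R,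
    (forall eps, 0 < eps <= 1 -> p eps ct = 0) /\
    (exists C : R, for_small_eps (fun eps => forall i, `|p eps i| <= C)) /\
    (forall i, gen_num_eq (fun eps => P eps i) (fun eps => p eps i)).

End Defs.

From HB Require Import structures.
From mathcomp Require Import all_boot all_order all_algebra.
From mathcomp Require Import all_classical all_reals all_analysis.
From mathcomp Require Import ring lra.
Import Order.TTheory GRing.Theory Num.Theory.
Import numFieldNormedType.Exports.
Local Open Scope classical_set_scope.
Local Open Scope ring_scope.

(* The metric is -dt^2 + rho with rho >= beta (dx^2 + dy^2) + dz^2, so a
   causal curve of Euclidean unit speed has |dt/ds| >= c > 0 uniformly for
   small eps on every compact interval. Hence for small eps the time
   coordinate t_eps(s) of gamma_eps is strictly monotone with slope at least
   c: it vanishes within distance |t_eps(0)|/c of 0, which yields the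
   compactly supported parameter, and two parameters at which t_eps is
   negligible differ by a negligible amount, which yields uniqueness. *)

Section SmallEps.
Context {R : realType}.

Lemma for_small_epsI {P Q : R -> Prop} :
  for_small_eps P -> for_small_eps Q -> for_small_eps (fun e => P e /\ Q e).
Proof.
move=> [e1 [/andP[e10 e11] h1]] [e2 [/andP[e20 e21] h2]].
exists (Num.min e1 e2); split; first by rewrite lt_min e10 e20 /= ge_min e11.
move=> e /andP[e0]; rewrite lt_min => /andP[l1 l2].
by split; [apply: h1 | apply: h2]; rewrite e0.
Qed.

Lemma for_small_epsS {P Q : R -> Prop} :
  (forall e, 0 < e <= 1 -> P e -> Q e) -> for_small_eps P -> for_small_eps Q.
Proof.
move=> PQ [e0 [/andP[e0_gt0 e0_le1] hP]]; exists e0; split; first by rewrite e0_gt0.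
move=> e /andP[e_gt0 e_lt]; apply: PQ; last by apply: hP; rewrite e_gt0.
by rewrite e_gt0 ltW // (lt_le_trans e_lt).
Qed.

Lemma for_small_eps_le {d : R} : 0 < d -> for_small_eps (fun e => e <= d).
Proof.
move=> d_gt0; exists (Num.min d 1); split.
  by rewrite lt_min d_gt0 ltr01 ge_min lexx orbT.
by move=> e /andP[_]; rewrite lt_min => /andP[/ltW].
Qed.

End SmallEps.

Section RealFunctions.
Context {R : realType}.
Implicit Types (f g : R -> R) (a b c x y : R).

Lemma MVT_derive1 f x y : (forall s, derivable f s 1) -> x < y ->
  exists2 z, x < z < y & f y - f x = derive1 f z * (y - x).
Proof.
move=> df xy.
have f'_is_derive z : z \in `]x, y[ -> is_derive z 1 f (derive1 f z).
  by move=> _; rewrite derive1E; apply: derivableP.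
have fC : {within `[x, y], continuous f}.
  by apply: derivable_within_continuous => z _; exact: df.
have [z zxy ->] := MVT xy f'_is_derive fC.
by exists z; rewrite // -in_itv.
Qed.

Lemma IVT_root g a b : {within `[a, b], continuous g} -> a <= b ->
  g a * g b <= 0 -> exists2 z, a <= z <= b & g z = 0.
Proof.
move=> gC ab gab.
have : Num.min (g a) (g b) <= 0 <= Num.max (g a) (g b).
  rewrite ge_min le_max; case: (leP (g a) 0) => ga /=.
    by case: (leP 0 (g a)) => // ga'; have -> : 0 <= g b by nra.
  have -> : g b <= 0 by nra.
  by rewrite (ltW ga).
by move=> /(IVT ab gC) [z zab gz]; exists z; rewrite // -in_itv.
Qed.

Lemma nonvanishing_continuous_same_sign g a b :
  {within `[a, b], continuous g} -> (forall x, a <= x <= b -> g x != 0) ->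
  forall x y, a <= x <= b -> a <= y <= b -> 0 < g x * g y.
Proof.
move=> gC g_neq0 x y xab yab; rewrite ltNge; apply/negP => gxy.
wlog xy : x y xab yab gxy / x <= y.
  move=> W; case: (leP x y) => [|/ltW]; first exact: W.
  by apply: W; rewrite // mulrC.
have gC' : {within `[x, y], continuous g}.
  apply: continuous_subspaceW gC; apply: subset_itv; rewrite bnd_simp.
  - by case/andP: xab.
  - by case/andP: yab.
have [z /andP[xz zy] /eqP] := IVT_root _ _ _ gC' xy gxy.
apply/negP/g_neq0; case/andP: xab => ax _; case/andP: yab => _ yb.
by rewrite (le_trans ax xz) (le_trans zy yb).
Qed.

Lemma derive1_ge_dist f a b c x y : (forall s, derivable f s 1) ->
  (forall z, a <= z <= b -> c <= `|derive1 f z|) ->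
  a <= x <= b -> a <= y <= b -> c * `|x - y| <= `|f x - f y|.
Proof.
move=> df f'_ge xab yab.
wlog xy : x y xab yab / x < y.
  move=> W; case: (ltgtP x y) => [|yx|->]; first exact: W.
    by rewrite distrC [`|f x - f y|]distrC; exact: W.
  by rewrite !subrr normr0 mulr0.
have [z /andP[xz zy] fxy] := MVT_derive1 _ _ _ df xy.
rewrite distrC [X in _ <= X]distrC fxy normrM ler_wpM2r //; apply: f'_ge.
case/andP: xab => ax _; case/andP: yab => _ yb.
by rewrite (le_trans ax (ltW xz)) (le_trans (ltW zy) yb).
Qed.

Lemma steps_opposite_signs (u d1 d2 r c : R) : 0 < r -> `|u| <= c * r ->
  c <= `|d1| -> c <= `|d2| -> 0 < d1 * d2 -> (u - d1 * r) * (u + d2 * r) <= 0.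
Proof.
rewrite ler_norml => r_gt0 /andP[ul ur] cd1 cd2 d12.
have [d1_gt0|d1_le0] := ltP 0 d1.
- have d2_gt0 : 0 < d2 by rewrite -(pmulr_rgt0 _ d1_gt0).
  rewrite !gtr0_norm // in cd1 cd2.
  have : c * r <= d1 * r by rewrite ler_wpM2r // ltW.
  have : c * r <= d2 * r by rewrite ler_wpM2r // ltW.
  nra.
- have d2_lt0 : d2 < 0 by nra.
  rewrite !ler0_norm ?(ltW d2_lt0) // in cd1 cd2.
  have : c * r <= - d1 * r by rewrite ler_wpM2r // ltW.
  have : c * r <= - d2 * r by rewrite ler_wpM2r // ltW.
  nra.
Qed.

Lemma root_of_derive1_ge f x0 r c : (forall s, derivable f s 1) ->
  {within `[x0 - r, x0 + r], continuous (derive1 f)} -> 0 < r -> 0 < c ->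
  (forall z, x0 - r <= z <= x0 + r -> c <= `|derive1 f z|) ->
  `|f x0| <= c * r -> exists2 z, x0 - r <= z <= x0 + r & f z = 0.
Proof.
move=> df f'C r_gt0 c_gt0 f'_ge fx0.
have f'_sign := nonvanishing_continuous_same_sign _ _ _ f'C.
have [|z1 /andP[z1l z1r] fl] := MVT_derive1 _ (x0 - r) x0 df; first by lra.
have [|z2 /andP[z2l z2r] fr] := MVT_derive1 _ x0 (x0 + r) df; first by lra.
have z1r' : x0 - r <= z1 <= x0 + r by apply/andP; split; lra.
have z2r' : x0 - r <= z2 <= x0 + r by apply/andP; split; lra.
have d12 : 0 < derive1 f z1 * derive1 f z2.
  apply: f'_sign => // z zr; rewrite -normr_gt0; exact: lt_le_trans (f'_ge _ zr).
have : f (x0 - r) * f (x0 + r) <= 0.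
  have -> : f (x0 - r) = f x0 - derive1 f z1 * r.
    by move: fl; rewrite opprB addrCA subrr addr0 => <-; ring.
  have -> : f (x0 + r) = f x0 + derive1 f z2 * r.
    by move: fr; rewrite addrAC subrr add0r => <-; ring.
  exact: steps_opposite_signs r_gt0 fx0 (f'_ge _ z1r') (f'_ge _ z2r') d12.
apply: IVT_root; last by lra.
by apply: derivable_within_continuous => z _; exact: df.
Qed.

End RealFunctions.

Section CausalCurves.
Context {R : realType}.

(* From vt^2 >= m (vx^2 + vy^2 + vz^2), m = min beta 1, and a squared speed of
   at least 1/2; capping beta at 1 keeps the bound below 1, so that it bounds
   |vt| and not only vt^2. *)
Definition time_speed_bound (beta : R) : R :=
  Num.min beta 1 / (2 * (1 + Num.min beta 1)).

Lemma time_speed_bound_gt0 {beta : R} : 0 < beta -> 0 < time_speed_bound beta.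
Proof.
move=> beta_gt0; have m_gt0 : 0 < Num.min beta 1 by rewrite lt_min beta_gt0 ltr01.
by rewrite divr_gt0 // mulr_gt0 // addr_gt0.
Qed.

Lemma le_norm_of_le_sqr (c x : R) : 0 <= c <= 1 -> c <= x ^+ 2 -> c <= `|x|.
Proof.
move=> /andP[c_ge0 c_le1]; rewrite -real_normK ?num_real // => cx.
have := normr_ge0 x; nra.
Qed.

Lemma time_component_ge {beta vt vx vy vz : R} : 0 < beta ->
  beta * (vx ^+ 2 + vy ^+ 2) + vz ^+ 2 <= vt ^+ 2 ->
  1 / 2 <= vt ^+ 2 + vx ^+ 2 + vy ^+ 2 + vz ^+ 2 ->
  time_speed_bound beta <= `|vt|.
Proof.
rewrite /time_speed_bound; set m := Num.min beta 1 => beta_gt0 cone sum_ge.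
have m_gt0 : 0 < m by rewrite lt_min beta_gt0 ltr01.
have m_le_beta : m <= beta by rewrite ge_min lexx.
have m_le1 : m <= 1 by rewrite ge_min lexx orbT.
have den_gt0 : 0 < 2 * (1 + m) by rewrite mulr_gt0 ?addr_gt0.
apply: le_norm_of_le_sqr.
  by rewrite divr_ge0 ?(ltW m_gt0) ?(ltW den_gt0) //= ler_pdivrMr // mul1r; lra.
rewrite ler_pdivrMr //.
have := sqr_ge0 vx; have := sqr_ge0 vy; have := sqr_ge0 vz => vz2 vy2 vx2.
have : m * (vx ^+ 2 + vy ^+ 2) <= beta * (vx ^+ 2 + vy ^+ 2) by rewrite ler_wpM2r ?addr_ge0.
have : m * vz ^+ 2 <= vz ^+ 2 by rewrite ler_piMl.
nra.
Qed.

Lemma sum_coords4 (F : 'I_4 -> R) : \sum_(i < 4) F i = F ct + F cx + F cy + F cz.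
Proof.
rewrite !big_ord_recl big_ord0 addr0 !addrA.
by do ![congr (_ + _)]; congr F; apply/val_inj.
Qed.

Lemma unit_speed_sum_ge_half {gam : R -> R -> 'I_4 -> R} :
  eucl_unit_speed gam -> forall a b : R,
  for_small_eps (fun eps => forall s, a <= s <= b ->
    1 / 2 <= \sum_(i < 4) vel gam eps s i ^+ 2).
Proof.
move=> unit_speed a b; have [C hC] := unit_speed 0%N a b 1%N.
have C1_gt0 : 0 < `|C| + 1 by rewrite ltr_wpDl.
have d_gt0 : 0 < (2 * (`|C| + 1))^-1 by rewrite invr_gt0 mulr_gt0.
apply: for_small_epsS _ (for_small_epsI hC (for_small_eps_le d_gt0)).
move=> eps /andP[eps_gt0 _] [near1 eps_le] s sab.
have := near1 s sab; rewrite /= expr1 ler_norml => /andP[lb _].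
have : C * eps <= `|C| * (2 * (`|C| + 1))^-1.
  apply: le_trans (ler_wpM2r (ltW eps_gt0) (ler_norm C)) _.
  by rewrite ler_wpM2l.
have : `|C| * (2 * (`|C| + 1))^-1 <= 1 / 2.
  by rewrite ler_pdivrMr ?mulr_gt0 //; lra.
lra.
Qed.

Lemma causal_time_speed_ge {alpha : R} {psi : R -> R -> R -> R}
    {gam : R -> R -> 'I_4 -> R} {beta : R} : 0 < beta ->
  (forall eps x y z v1 v2 v3, 0 < eps <= 1 ->
     beta * (v1 ^+ 2 + v2 ^+ 2) + v3 ^+ 2 <= rho alpha psi eps x y z v1 v2 v3) ->
  eucl_unit_speed gam ->
  for_small_eps (fun eps => forall s,
    g_alpha alpha psi eps (gam eps s) (vel gam eps s) <= 0) ->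
  forall a b : R, for_small_eps (fun eps => forall s, a <= s <= b ->
    time_speed_bound beta <= `|vel gam eps s ct|).
Proof.
move=> beta_gt0 rho_ge unit_speed causal a b.
apply: for_small_epsS _ (for_small_epsI causal (unit_speed_sum_ge_half unit_speed a b)).
move=> eps eps01 [g_le sum_ge] s sab.
have := sum_ge s sab; rewrite sum_coords4 => sum_ge'.
apply: (time_component_ge beta_gt0 _ sum_ge').
have := g_le s; rewrite /g_alpha -subr_le0 => g_le'.
apply: le_trans (rho_ge eps _ _ _ _ _ _ eps01) _; lra.
Qed.

End CausalCurves.

Section GeneralizedPoints.
Context {R : realType}.

Lemma in_S_tilde_c_of_bounded (P : R -> 'I_4 -> R) (C : R) :
  for_small_eps (fun eps => P eps ct = 0 /\ forall i, `|P eps i| <= C) ->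
  in_S_tilde_c P.
Proof.
move=> P_S; exists (fun eps i => if i == ct then 0 else P eps i); split.
  by move=> eps _; rewrite eqxx.
split.
  exists `|C|; apply: for_small_epsS _ P_S => eps _ [_ P_le] i.
  by case: eqP => _; [rewrite normr0 | exact: le_trans (P_le i) (ler_norm C)].
move=> i m; exists 0; apply: for_small_epsS _ P_S => eps _ [P_ct _].
by case: eqP => [->|_]; rewrite ?P_ct subrr normr0 mul0r.
Qed.

Lemma in_S_tilde_c_time_negligible (P : R -> 'I_4 -> R) : in_S_tilde_c P ->
  forall m, exists K, for_small_eps (fun eps => `|P eps ct| <= K * eps ^+ m).
Proof.
move=> [p [p_ct [_ P_p]]] m; have [K P_pK] := P_p ct m.
by exists K; apply: for_small_epsS _ P_pK => eps eps01; rewrite p_ct // subr0.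
Qed.

End GeneralizedPoints.

Section TimeFunction.
Context {R : realType}.
Context {gam : R -> R -> 'I_4 -> R} {c : R}.
Hypotheses (gam_smooth : forall eps, 0 < eps <= 1 ->
                           forall i, smooth_fun (fun s => gam eps s i))
           (gam_bounded : forall a b, exists C, for_small_eps (fun eps =>
              forall s i, a <= s <= b -> `|gam eps s i| <= C))
           (c_gt0 : 0 < c)
           (time_speed_ge : forall a b, for_small_eps (fun eps =>
              forall s, a <= s <= b -> c <= `|vel gam eps s ct|)).

Lemma time_root_exists {C A : R} : 0 < A -> C <= c * A ->
  for_small_eps (fun eps => `|gam eps 0 ct| <= C) ->
  for_small_eps (fun eps => exists t, `|t| <= A /\ gam eps t ct = 0).
Proof.
move=> A_gt0 C_le gam0_le.
apply: for_small_epsS _ (for_small_epsI gam0_le (time_speed_ge (0 - A) (0 + A))).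
move=> eps eps01 [gam0_le' speed_ge].
have df s : derivable (fun r => gam eps r ct) s 1 := gam_smooth _ eps01 ct 0%N s.
have f'C : {within `[0 - A, 0 + A], continuous (derive1 (fun r => gam eps r ct))}.
  by apply: derivable_within_continuous => s _; exact: gam_smooth _ eps01 ct 1%N s.
have [|t tA gt0] := root_of_derive1_ge _ _ _ _ df f'C A_gt0 c_gt0 speed_ge.
  exact: le_trans gam0_le' C_le.
by exists t; split => //; rewrite ler_norml; move: tA; rewrite sub0r add0r.
Qed.

Lemma time_root_net : exists s : R -> R,
  cpt_gen_num s /\ for_small_eps (fun eps => gam eps (s eps) ct = 0).
Proof.
have [C gam0_le] := gam_bounded 0 0.
have gam0_le' : for_small_eps (fun eps => `|gam eps 0 ct| <= C).
  by apply: for_small_epsS _ gam0_le => eps _ /(_ 0 ct); rewrite lexx; apply.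
set A := (`|C| + 1) / c.
have A_gt0 : 0 < A by rewrite divr_gt0 ?ltr_wpDl.
have C_le : C <= c * A.
  by rewrite mulrC divfK ?gt_eqF // (le_trans (ler_norm C)) // lerDl.
(* [xget] picks a root whenever there is one, i.e. for all small eps. *)
pose s eps := xget 0 [set t | `|t| <= A /\ gam eps t ct = 0].
have s_root : for_small_eps (fun eps => `|s eps| <= A /\ gam eps (s eps) ct = 0).
  apply: for_small_epsS _ (time_root_exists A_gt0 C_le gam0_le') => eps _.
  exact: xgetPex.
exists s; split; first by exists A; apply: for_small_epsS _ s_root => eps _ [].
by apply: for_small_epsS _ s_root => eps _ [].
Qed.

Lemma in_S_tilde_c_root {s : R -> R} :
  cpt_gen_num s -> for_small_eps (fun eps => gam eps (s eps) ct = 0) ->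
  in_S_tilde_c (fun eps => gam eps (s eps)).
Proof.
move=> [A s_le] s_root; have [CA gamA_le] := gam_bounded (- A) A.
apply: (in_S_tilde_c_of_bounded _ CA).
apply: for_small_epsS _ (for_small_epsI (for_small_epsI s_le s_root) gamA_le).
by move=> eps _ [[sA gs0] gam_le]; split=> // i; apply: gam_le; rewrite -ler_norml.
Qed.

Lemma time_root_unique {s s' : R -> R} :
  cpt_gen_num s -> for_small_eps (fun eps => gam eps (s eps) ct = 0) ->
  cpt_gen_num s' ->
  (forall m, exists K, for_small_eps (fun eps => `|gam eps (s' eps) ct| <= K * eps ^+ m)) ->
  gen_num_eq s' s.
Proof.
move=> [A s_le] s_root [A' s'_le] s'_root m; have [K s'_rootK] := s'_root m.
set B := `|A| + `|A'|.
exists (K / c); apply: for_small_epsS _ (for_small_epsI (for_small_epsI s_le s_root)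
  (for_small_epsI (for_small_epsI s'_le s'_rootK) (time_speed_ge (- B) B))).
move=> eps eps01 [[sA gs0] [[s'A' gs'K] speed_ge]].
have df t : derivable (fun r => gam eps r ct) t 1 := gam_smooth _ eps01 ct 0%N t.
have inB (t D : R) : `|D| <= B -> `|t| <= D -> - B <= t <= B.
  by move=> DB tD; rewrite -ler_norml (le_trans tD) // (le_trans (ler_norm D)).
have A_le : `|A| <= B by rewrite lerDl.
have A'_le : `|A'| <= B by rewrite lerDr.
have := derive1_ge_dist _ _ _ _ _ _ df speed_ge (inB _ _ A'_le s'A') (inB _ _ A_le sA).
rewrite gs0 subr0 => dist_le.
rewrite mulrAC ler_pdivlMr // [X in X <= _]mulrC.
exact: le_trans dist_le gs'K.
Qed.

End TimeFunction.

Theorem mainTheorem4 (R : realType) (alpha : R) (psi : R -> R -> R -> R)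
    (gam : R -> R -> 'I_4 -> R) :
  0 < alpha < 1 ->
  delta_net psi ->
  (exists beta : R, 0 < beta /\
     forall eps x y z v1 v2 v3, 0 < eps <= 1 ->
       beta * (v1 ^+ 2 + v2 ^+ 2) + v3 ^+ 2 <= rho alpha psi eps x y z v1 v2 v3) ->
  c_bounded_curve_rep gam ->
  eucl_unit_speed gam ->
  (exists q : R, 0 <= q /\
     for_small_eps (fun eps => forall s : R,
       g_alpha alpha psi eps (gam eps s) (vel gam eps s) <= - (eps `^ q))) ->
  exists s : R -> R,
    cpt_gen_num s /\ in_S_tilde_c (fun eps => gam eps (s eps)) /\
    forall s' : R -> R,
      cpt_gen_num s' -> in_S_tilde_c (fun eps => gam eps (s' eps)) ->
      gen_num_eq s' s.
Proof.
move=> _ _ [beta [beta_gt0 rho_ge]] [gam_smooth [_ gam_bounded]] unit_speed [q [_ g_neg]].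
have causal : for_small_eps (fun eps => forall s,
    g_alpha alpha psi eps (gam eps s) (vel gam eps s) <= 0).
  apply: for_small_epsS _ g_neg => eps _ g_le s.
  by rewrite (le_trans (g_le s)) // oppr_le0 powR_ge0.
have time_speed := causal_time_speed_ge beta_gt0 rho_ge unit_speed causal.
have c_gt0 := time_speed_bound_gt0 beta_gt0.
have [s [s_cpt s_root]] := time_root_net gam_smooth gam_bounded c_gt0 time_speed.
exists s; split=> //; split.
  exact: (in_S_tilde_c_root gam_bounded s_cpt s_root).
move=> s' s'_cpt /in_S_tilde_c_time_negligible s'_root.
exact: (time_root_unique gam_smooth c_gt0 time_speed s_cpt s_root s'_cpt).
Qed.
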